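(* Let $g\in V$ be represented by a pair of finite rooted binary trees $(T_-,T_+)$, each with $n\ge 1$ leaves, together with a bijection $\sigma$ of $\{1,\dots,n\}$. Form the closed labelled strand diagram $D_0(g)$ of $g$ as described in the context, and apply labelled Rule I repeatedly, in any order, until no edge goes from a merge vertex to a split vertex. Then the final labelled diagram has at most $n$ connected components, and the sum of all its edge labels is at most $2^{n-1}$.
   Context: The Cantor set $\mathfrak C=\{0,1\}^{\mathbb N}$. A finite rooted binary tree with $n$ leaves, ordered left to right, determines a partition of $\mathfrak C$ into $n$ cones $u_1\mathfrak C,\dots,u_n\mathfrak C$, where $u_i$ is the finite binary address of the $i$-th leaf (left child appends $0$, right child appends $1$). A triple $(T_-,T_+,\sigma)$ represents the element $g$ of Thompson's group $V$ given by $g(u_i w)=v_{\sigma(i)}w$, where $u_i$ (resp. $v_j$) are the leaf addresses of $T_-$ (resp. $T_+$). Closed labelled strand diagram $D_0(g)$: a finite directed graph with $2n-2$ trivalent vertices. The $n-1$ internal nodes of $T_-$ become split vertices (one incoming edge, two outgoing edges ordered left/right), with edges directed from the root toward the leaves; the $n-1$ internal nodes of $T_+$ become merge vertices (two incoming edges ordered left/right, one outgoing edge), with edges directed from the leaves toward the root. The $i$-th leaf of $T_-$ is joined to the $\sigma(i)$-th leaf of $T_+$ (the resulting bivalent points are erased, so each such path becomes a single edge), and finally the root of $T_+$ is joined by an edge to the root of $T_-$ (again erasing bivalent points). If $n=1$ the diagram is a single closed loop with no vertices. Every edge carries a nonnegative integer label: the edge (or loop) passing through the glued roots has label $1$, all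 other edges have label $0$. Labelled Rule I: suppose an edge $e$ with label $y$ goes from a merge vertex $m$ to a split vertex $s$, where $m$ has incoming edges $x_1$ (left) and $x_2$ (right) and $s$ has outgoing edges $z_1$ (left) and $z_2$ (right). Delete $m$, $s$ and $e$, and for $i=1,2$ join the strand $x_i$ directly to the strand $z_i$ (concatenating $x_i$, $e$, $z_i$). The label of each resulting edge is the sum of the labels of all old edge-pieces it is composed of, counted with multiplicity (e.g. if $x_1,x_2,z_1,z_2$ are distinct, the new edges have labels $x_1+y+z_1$ and $x_2+y+z_2$; if $x_2=z_1$, the result is a single edge with label $x_1+x_2+2y+z_2$). Strands that close up on themselves become closed loops (circle components without vertices), whose label is the sum of the labels along them. *)

From mathcomp Require Import all_boot.
From mathcomp Require Import fingroup perm.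
Set Implicit Arguments. Unset Strict Implicit. Unset Printing Implicit Defensive.

Inductive tree := Leaf | Node of tree & tree.

Fixpoint leaves (t : tree) : nat :=
  match t with Leaf => 1 | Node l r => leaves l + leaves r end.

Fixpoint size_int (t : tree) : nat :=
  match t with Leaf => 0 | Node l r => (size_int l + size_int r).+1 end.

(** Internal nodes of [t] get identifiers by preorder numbering starting at
    offset [o]: a node with id [o] has its left subtree numbered from [o.+1]
    and its right subtree from [o.+1 + size_int l]. *)
Fixpoint nodes (t : tree) (o : nat) : seq nat :=
  match t with
  | Leaf => [::]
  | Node l r => o :: nodes l o.+1 ++ nodes r (o.+1 + size_int l)
  end.

(** Internal tree edges: ((parent id, side), child id); side false = left. *)
Fixpoint iedges (t : tree) (o : nat) : seq ((nat * bool) * nat) :=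
  match t with
  | Leaf => [::]
  | Node l r =>
      let ol := o.+1 in let orr := o.+1 + size_int l in
      (if l is Node _ _ then [:: ((o, false), ol)] else [::]) ++
      (if r is Node _ _ then [:: ((o, true), orr)] else [::]) ++
      iedges l ol ++ iedges r orr
  end.

(** Leaves of [t], left to right, each given by the (parent id, side) port
    to which it is attached (for a non-trivial tree). *)
Fixpoint lports (t : tree) (o : nat) : seq (nat * bool) :=
  match t with
  | Leaf => [::]
  | Node l r =>
      let ol := o.+1 in let orr := o.+1 + size_int l in
      (if l is Node _ _ then lports l ol else [:: (o, false)]) ++
      (if r is Node _ _ then lports r orr else [:: (o, true)])
  end.

(** * Labelled strand diagrams
   A port is (vertex id, bool).  For a split vertex v: the incoming port is
   (v,false), the outgoing ports are (v,false) (left) and (v,true) (right).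
   For a merge vertex v: incoming ports (v,false) (left), (v,true) (right),
   outgoing port (v,false).
   Closed loops (vertex-free circle components) are recorded by their labels. *)
Definition edge := (((nat * bool) * (nat * bool)) * nat)%type.
Definition esrc (x : edge) : nat * bool := x.1.1.
Definition edst (x : edge) : nat * bool := x.1.2.
Definition elab (x : edge) : nat := x.2.
Definition mkedge (p q : nat * bool) (l : nat) : edge := ((p, q), l).

Record diagram := Diagram {
  splits : seq nat;
  merges : seq nat;
  edges  : seq edge;
  loops  : seq nat }.

Definition D0 (n : nat) (Tm Tp : tree) (sigma : 'S_n) : diagram :=
  match Tm, Tp with
  | Node _ _, Node _ _ =>
      let o := size_int Tm in
      let lm := lports Tm 0 in
      let lp := lports Tp o in
      Diagram (nodes Tm 0) (nodes Tp o)
        ([seq mkedge pc.1 (pc.2, false) 0 | pc <- iedges Tm 0] ++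
         [seq mkedge (pc.2, false) pc.1 0 | pc <- iedges Tp o] ++
         [seq mkedge (nth (0, false) lm i) (nth (0, false) lp (sigma i)) 0
            | i : 'I_n <- enum 'I_n] ++
         [:: mkedge (o, false) (0, false) 1])
        [::]
  | _, _ => Diagram [::] [::] [::] [:: 1]
  end.

(** * Labelled Rule I
   Implementation: the edge e (label y) from merge m to split s is removed,
   together with m and s; two fresh bivalent points j0, j1 (each carrying
   label y) are inserted, the strand x_i (into input i of m) now ends at j_i
   and the strand z_i (out of output i of s) now starts at j_i.  Then the
   bivalent points are erased one at a time ([contract]): the two pieces
   through j are concatenated (labels summed, plus y), and if the piece
   through j closes up on itself it becomes a closed loop. *)
Definition contract (j y : nat) (D : seq edge * seq nat) : seq edge * seq nat :=
  let: (es, ls) := D in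
  let rest := [seq x <- es | ((esrc x).1 != j) && ((edst x).1 != j)] in
  match [seq x <- es | (esrc x).1 == j], [seq x <- es | (edst x).1 == j] with
  | [:: b], [:: a] =>
      if a == b then (rest, (elab a + y) :: ls)
      else (mkedge (esrc a) (edst b) (elab a + y + elab b) :: rest, ls)
  | _, _ => (es, ls)
  end.

Definition redirect (m s j0 j1 : nat) (x : edge) : edge :=
  mkedge (if (esrc x).1 == s then (if (esrc x).2 then j1 else j0, false)
          else esrc x)
         (if (edst x).1 == m then (if (edst x).2 then j1 else j0, false)
          else edst x)
         (elab x).

Definition ids (D : diagram) : seq nat :=
  splits D ++ merges D ++
  flatten [seq [:: (esrc x).1; (edst x).1] | x <- edges D].

Definition fresh (D : diagram) : nat := (foldr maxn 0 (ids D)).+1.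

Definition applyI (D : diagram) (e : edge) : diagram :=
  let m := (esrc e).1 in let s := (edst e).1 in let y := elab e in
  let j0 := fresh D in let j1 := (fresh D).+1 in
  let es1 := map (redirect m s j0 j1) (rem e (edges D)) in
  let r := contract j1 y (contract j0 y (es1, loops D)) in
  Diagram [seq v <- splits D | v != s] [seq v <- merges D | v != m] r.1 r.2.

Definition merge_split_edge (D : diagram) (e : edge) : bool :=
  [&& e \in edges D, (esrc e).1 \in merges D & (edst e).1 \in splits D].

Definition ruleI (D D' : diagram) : Prop :=
  exists e, merge_split_edge D e /\ D' = applyI D e.

Inductive reduces : diagram -> diagram -> Prop :=
  | reduces_refl D : reduces D D
  | reduces_step D D' D'' : ruleI D D' -> reduces D' D'' -> reduces D D''.

Definition reduced (D : diagram) : Prop :=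
  forall e, ~~ merge_split_edge D e.

Definition vset (D : diagram) : seq nat := undup (splits D ++ merges D).

Definition adjD (D : diagram) : rel (seq_sub (vset D)) :=
  fun u v => has (fun x => (((esrc x).1 == val u) && ((edst x).1 == val v))
                        || (((esrc x).1 == val v) && ((edst x).1 == val u)))
                 (edges D).

Definition ncomponents (D : diagram) : nat :=
  n_comp (@adjD D) predT + size (loops D).

Definition total_label (D : diagram) : nat :=
  sumn (map elab (edges D)) + sumn (loops D).

From mathcomp Require Import all_boot.
From mathcomp Require Import fingroup perm.
From mathcomp Require Import zify.
Set Implicit Arguments. Unset Strict Implicit. Unset Printing Implicit Defensive.

(* Every application of Rule I removes one merge vertex, and D_0 has n - 1 of them.  A move
   deletes an edge of label y and adds y to each of the (at most two) strands it reconnects,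
   so the total label grows by y, i.e. at most doubles; hence
   total_label * 2 ^ #merges <= 2 ^ (n - 1) is invariant.  Likewise cutting the strand
   through the deleted edge splits at most one component into two, so if R is a set of
   representatives of the components then |R| + #loops + #merges <= n is invariant.  D_0 is
   connected with label 1, so both invariants hold initially. *)

Definition touches (u v : nat) (x : edge) : bool :=
  (((esrc x).1 == u) && ((edst x).1 == v)) || (((esrc x).1 == v) && ((edst x).1 == u)).

Definition linked (es : seq edge) (u v : nat) : bool := has (touches u v) es.

Inductive connected (es : seq edge) : nat -> nat -> Prop :=
| connected_refl u : connected es u u
| connected_step u v w : linked es u v -> connected es v w -> connected es u w.

Lemma touchesC u v x : touches u v x = touches v u x.
Proof. by rewrite /touches orbC. Qed.

Lemma touchesE u v x : touches u v x ->
  ((esrc x).1 = u /\ (edst x).1 = v) \/ ((esrc x).1 = v /\ (edst x).1 = u).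
Proof. by case/orP=> /andP[/eqP-> /eqP->]; [left|right]. Qed.

Lemma linkedC es u v : linked es u v = linked es v u.
Proof. by apply: eq_has => x; rewrite touchesC. Qed.

Lemma linkedP es u v : reflect (exists2 x, x \in es & touches u v x) (linked es u v).
Proof. exact: hasP. Qed.

Lemma linked_edge es x : x \in es -> linked es (esrc x).1 (edst x).1.
Proof. by move=> hx; apply/linkedP; exists x; rewrite // /touches !eqxx. Qed.

Lemma connected_trans es u v w : connected es u v -> connected es v w -> connected es u w.
Proof. by elim=> // a b c Hab _ IH /IH; apply: connected_step. Qed.

Lemma linked_connected es u v : linked es u v -> connected es u v.
Proof. by move=> H; apply: connected_step H (connected_refl _ _). Qed.

Lemma connected_sym es u v : connected es u v -> connected es v u.
Proof.
elim=> [a|a b c Hab _ IH]; first exact: connected_refl.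
by apply: connected_trans IH _; apply: linked_connected; rewrite linkedC.
Qed.

Definition lsum (es : seq edge) : nat := \sum_(x <- es) elab x.

Definition covers (es : seq edge) (V R : seq nat) : Prop :=
  forall v, v \in V -> exists2 r, r \in R & connected es v r.

Lemma count1_filterE (T : Type) (x0 : T) (p : pred T) (s : seq T) :
  count p s = 1 -> filter p s = [:: head x0 (filter p s)].
Proof. by rewrite -size_filter; case: (filter p s) => [|? []]. Qed.

Lemma count_sumE (T : Type) (p : pred T) (s : seq T) :
  count p s = \sum_(x <- s) (p x : nat).
Proof. by rewrite -sumn_count sumnE big_map. Qed.

(** * Erasing a bivalent point *)

Section Contract.
Variables (j y : nat) (es : seq edge) (ls : seq nat).
Hypothesis out_j : count (fun x => (esrc x).1 == j) es = 1.
Hypothesis in_j : count (fun x => (edst x).1 == j) es = 1.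

Let rest := [seq x <- es | ((esrc x).1 != j) && ((edst x).1 != j)].
Let e0 := mkedge (0, false) (0, false) 0.
Let b := head e0 [seq x <- es | (esrc x).1 == j].
Let a := head e0 [seq x <- es | (edst x).1 == j].
Let es' := (contract j y (es, ls)).1.
Let ls' := (contract j y (es, ls)).2.

Let out_jE : [seq x <- es | (esrc x).1 == j] = [:: b].
Proof. exact: count1_filterE. Qed.
Let in_jE : [seq x <- es | (edst x).1 == j] = [:: a].
Proof. exact: count1_filterE. Qed.

Let contractE : contract j y (es, ls) = if a == b then (rest, (elab a + y) :: ls)
  else (mkedge (esrc a) (edst b) (elab a + y + elab b) :: rest, ls).
Proof. by rewrite /contract out_jE in_jE. Qed.

Let out_j_uniq x : x \in es -> (esrc x).1 == j -> x = b.
Proof.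
by move=> hx hj; apply/eqP; rewrite -mem_seq1 -out_jE mem_filter hj hx.
Qed.

Let in_j_uniq x : x \in es -> (edst x).1 == j -> x = a.
Proof.
by move=> hx hj; apply/eqP; rewrite -mem_seq1 -in_jE mem_filter hj hx.
Qed.

Let mem_out_j : b \in es /\ (esrc b).1 == j.
Proof.
have: b \in [seq x <- es | (esrc x).1 == j] by rewrite out_jE mem_seq1.
by rewrite mem_filter => /andP[].
Qed.

Let mem_in_j : a \in es /\ (edst a).1 == j.
Proof.
have: a \in [seq x <- es | (edst x).1 == j] by rewrite in_jE mem_seq1.
by rewrite mem_filter => /andP[].
Qed.

Let src_in_jE : ((esrc a).1 == j) = (a == b).
Proof.
apply/idP/eqP => [hj|->]; last by case: mem_out_j.
by apply: out_j_uniq hj; case: mem_in_j.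
Qed.

Let dst_out_jE : ((edst b).1 == j) = (a == b).
Proof.
apply/idP/eqP => [hj|<-]; last by case: mem_in_j.
by symmetry; apply: in_j_uniq hj; case: mem_out_j.
Qed.

Let contract_sum (f : edge -> nat) :
  \sum_(x <- es) f x + (a == b) * f a = f a + f b + \sum_(x <- rest) f x.
Proof.
rewrite (bigID (fun x => (esrc x).1 == j)) /= -big_filter out_jE big_seq1.
rewrite (bigID (fun x => (edst x).1 == j)) /=.
have -> : \sum_(x <- es | ~~ ((esrc x).1 == j) && ((edst x).1 == j)) f x =
          \sum_(x <- [seq x <- es | (edst x).1 == j] | ~~ ((esrc x).1 == j)) f x.
  by rewrite big_filter_cond; apply: eq_bigl => x; rewrite andbC.
rewrite in_jE big_cons big_nil src_in_jE big_filter.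
case: (a == b) => /=; lia.
Qed.

Lemma contract_total : lsum es' + sumn ls' = lsum es + sumn ls + y.
Proof.
have := contract_sum elab; rewrite /es' /ls' contractE /lsum.
by case: eqP => [<-|_] /=; rewrite ?big_cons /elab /=; lia.
Qed.

Lemma contract_count_src (q : pred (nat * bool)) : (forall c, q (j, c) = false) ->
  count (fun x => q (esrc x)) es' = count (fun x => q (esrc x)) es.
Proof.
move=> qj; have := contract_sum (fun x => q (esrc x)); rewrite -!count_sumE.
have qb : q (esrc b) = false.
  by case: mem_out_j => _; case: (esrc b) => v c /= /eqP ->.
rewrite /es' contractE; case: eqP => [ab|_] /=; last by rewrite qb /esrc /=; lia.
by rewrite ab qb; lia.
Qed.

Lemma contract_count_dst (q : pred (nat * bool)) : (forall c, q (j, c) = false) ->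
  count (fun x => q (edst x)) es' = count (fun x => q (edst x)) es.
Proof.
move=> qj; have := contract_sum (fun x => q (edst x)); rewrite -!count_sumE.
have qa : q (edst a) = false.
  by case: mem_in_j => _; case: (edst a) => v c /= /eqP ->.
rewrite /es' contractE; case: eqP => [ab|_] /=; last by rewrite qa /edst /=; lia.
by rewrite -ab qa; lia.
Qed.

Let mem_rest x : x \in es -> (esrc x).1 != j -> (edst x).1 != j -> x \in rest.
Proof. by move=> hx hs hd; rewrite mem_filter hs hd hx. Qed.

Let rest_sub x : x \in rest -> x \in es'.
Proof. by rewrite /es' contractE; case: eqP => // _ h; rewrite inE h orbT. Qed.

Lemma contract_end (P : pred nat) :
  (forall x, x \in es -> P (esrc x).1 && P (edst x).1) ->
  forall x, x \in es' -> [&& P (esrc x).1, (esrc x).1 != j, P (edst x).1 & (edst x).1 != j].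
Proof.
move=> hP x; rewrite /es' contractE.
have in_rest : x \in rest -> [&& P (esrc x).1, (esrc x).1 != j, P (edst x).1 & (edst x).1 != j].
  by rewrite mem_filter => /andP[/andP[-> ->] /hP /andP[-> ->]].
case: eqP => [_|/eqP ab]; first exact: in_rest.
rewrite inE => /orP[/eqP->|]; last exact: in_rest.
rewrite /= src_in_jE dst_out_jE ab.
by case/andP: (hP a (proj1 mem_in_j)) => -> _; case/andP: (hP b (proj1 mem_out_j)) => _ ->.
Qed.

(* When the strand through [j] is not a loop, its two ends are identified with [esrc a]. *)
Let fj (u : nat) := if u == j then (esrc a).1 else u.

Let contract_connected_strand : a != b -> forall u w, connected es u w -> connected es' (fj u) (fj w).
Proof.
move=> ab u w; elim=> [v|u1 v w1 H _ IH]; first exact: connected_refl.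
apply: connected_trans IH; case/linkedP: H => x hx tx.
have new : linked es' (esrc a).1 (edst b).1.
  apply/linkedP; exists (mkedge (esrc a) (edst b) (elab a + y + elab b)).
    by rewrite /es' contractE (negbTE ab) mem_head.
  by rewrite /touches /= !eqxx.
rewrite /fj; case: (eqVneq u1 j) => [e1|n1]; case: (eqVneq v j) => [e2|n2].
- exact: connected_refl.
- case/touchesE: tx => [[s1 d1]|[s1 d1]].
  + have xb : x = b by apply: out_j_uniq; rewrite // s1 e1.
    by rewrite -d1 xb; apply: linked_connected.
  + have xa : x = a by apply: in_j_uniq; rewrite // d1 e1.
    by rewrite -xa s1; apply: connected_refl.
- case/touchesE: tx => [[s1 d1]|[s1 d1]].
  + have xa : x = a by apply: in_j_uniq; rewrite // d1 e2.
    by rewrite -xa s1; apply: connected_refl.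
  + have xb : x = b by apply: out_j_uniq; rewrite // s1 e2.
    by apply: linked_connected; rewrite linkedC -d1 xb.
- apply: linked_connected; apply/linkedP; exists x => //; apply: rest_sub.
  by case/touchesE: tx => -[s1 d1]; rewrite mem_rest ?s1 ?d1.
Qed.

Let contract_connected_loop : a == b -> forall u w, connected es u w -> u != j ->
  w != j /\ connected es' u w.
Proof.
move=> ab u w; elim=> [v|u1 v w1 H _ IH] hu; first by split=> //; apply: connected_refl.
case/linkedP: H => x hx tx.
have nv : v != j.
  apply/eqP => vj; case/touchesE: tx => [[s1 d1]|[s1 d1]].
  + have xa : x = a by apply: in_j_uniq; rewrite // d1 vj.
    by move: src_in_jE; rewrite ab -xa s1 (negbTE hu).
  + have xb : x = b by apply: out_j_uniq; rewrite // s1 vj.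
    by move: dst_out_jE; rewrite ab -xb d1 (negbTE hu).
have [-> c] := IH nv; split=> //; apply: connected_step c; apply/linkedP; exists x => //.
by apply: rest_sub; case/touchesE: tx => -[s1 d1]; rewrite mem_rest ?s1 ?d1.
Qed.

Lemma contract_covers V R : covers es V R -> j \notin V -> j \in R ->
  exists R', [/\ covers es' V R', size R' + size ls' <= size R + size ls
             & forall k, k \in R -> k != j -> k \in R'].
Proof.
move=> cv jV jR; have vj v : v \in V -> v != j by move=> hv; apply: contraNneq jV => <-.
case: (eqVneq a b) => [ab|ab].
- exists (rem j R); split.
  + move=> v hv; have [r hr c] := cv v hv.
    have [rj c'] := contract_connected_loop (introT eqP ab) c (vj v hv).
    by exists r; first exact: rem_mem.
  + rewrite /ls' contractE ab eqxx /= size_rem //.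
    by case: (R) jR => //= *; lia.
  + by move=> k hk nk; apply: rem_mem.
- exists (map fj R); split.
  + move=> v hv; have [r hr c] := cv v hv.
    have := contract_connected_strand ab c; rewrite {1}/fj (negbTE (vj v hv)) => c'.
    by exists (fj r); first exact: map_f.
  + by rewrite /ls' contractE (negbTE ab) size_map.
  + by move=> k hk nk; have := map_f fj hk; rewrite /fj (negbTE nk).
Qed.

End Contract.

(** * Rule I *)

Lemma count_gt0_mem (T : eqType) (p : pred T) (s : seq T) x :
  x \in s -> p x -> 0 < count p s.
Proof. by move=> hx px; rewrite -has_count; apply/hasP; exists x. Qed.

Definition src_count (es : seq edge) (p : nat * bool) : nat := count (fun x => esrc x == p) es.
Definition dst_count (es : seq edge) (p : nat * bool) : nat := count (fun x => edst x == p) es.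

Record wf_diagram (D : diagram) : Prop := {
  wf_disjoint : forall v, v \in splits D -> v \notin merges D;
  wf_split : forall v, v \in splits D ->
     [/\ dst_count (edges D) (v, false) = 1, dst_count (edges D) (v, true) = 0,
         src_count (edges D) (v, false) = 1 & src_count (edges D) (v, true) = 1];
  wf_merge : forall v, v \in merges D ->
     [/\ dst_count (edges D) (v, false) = 1, dst_count (edges D) (v, true) = 1,
         src_count (edges D) (v, false) = 1 & src_count (edges D) (v, true) = 0];
  wf_ends : forall x, x \in edges D ->
     ((esrc x).1 \in splits D ++ merges D) && ((edst x).1 \in splits D ++ merges D) }.

Lemma total_labelE D : total_label D = lsum (edges D) + sumn (loops D).
Proof. by rewrite /total_label sumnE big_map. Qed.

Lemma foldr_maxn_ub (l : seq nat) x : x \in l -> x <= foldr maxn 0 l.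
Proof.
elim: l => //= h t IH; rewrite inE => /orP[/eqP->|/IH h1]; first exact: leq_maxl.
exact: leq_trans h1 (leq_maxr _ _).
Qed.

Lemma fresh_gt D x : x \in ids D -> x < fresh D.
Proof. by move=> h; rewrite /fresh ltnS foldr_maxn_ub. Qed.

Lemma fresh_gt_vertex D v : v \in splits D ++ merges D -> v < fresh D.
Proof. by move=> h; apply: fresh_gt; rewrite /ids catA mem_cat h. Qed.

Lemma fresh_gt_edge D x : x \in edges D -> (esrc x).1 < fresh D /\ (edst x).1 < fresh D.
Proof.
move=> h; split; apply: fresh_gt; rewrite /ids !mem_cat; apply/orP; right; apply/orP; right;
  apply/flattenP; exists [:: (esrc x).1; (edst x).1]; rewrite ?inE ?eqxx ?orbT //;
  exact: map_f.
Qed.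

Lemma portE (p : nat * bool) : p = (p.1, false) \/ p = (p.1, true).
Proof. by case: p => v []; [right|left]. Qed.

Section RuleI.
Variables (D : diagram) (e : edge).
Hypothesis wf : wf_diagram D.
Hypothesis mse : merge_split_edge D e.

Let G := edges D.
Let m := (esrc e).1.
Let s := (edst e).1.
Let y := elab e.
Let j0 := fresh D.
Let j1 := (fresh D).+1.
Let es1 := map (redirect m s j0 j1) (rem e G).
Let es2 := contract j0 y (es1, loops D).
Let es3 := contract j1 y (es2.1, es2.2).
Let V' := [seq v <- splits D | v != s] ++ [seq v <- merges D | v != m].

Let applyIE : applyI D e = Diagram [seq v <- splits D | v != s] [seq v <- merges D | v != m] es3.1 es3.2.
Proof. by rewrite /applyI /es3 /es2; case: (contract (fresh D) (elab e) _). Qed.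

Let eG : e \in G. Proof. by case/and3P: mse. Qed.
Let mM : m \in merges D. Proof. by case/and3P: mse. Qed.
Let sS : s \in splits D. Proof. by case/and3P: mse. Qed.
Let sNM : s \notin merges D. Proof. exact: wf_disjoint. Qed.

Let merge_split_neq : m != s.
Proof. by apply: contraNneq sNM => <-. Qed.

Let esrc_mse : esrc e = (m, false).
Proof.
have [_ _ _ h] := wf_merge wf mM.
case: (portE (esrc e)) => // E.
by have := count_gt0_mem (p := fun x => esrc x == (m, true)) eG; rewrite E eqxx -/(src_count G _) h => /(_ isT).
Qed.

Let edst_mse : edst e = (s, false).
Proof.
have [_ h _ _] := wf_split wf sS.
case: (portE (edst e)) => // E.
by have := count_gt0_mem (p := fun x => edst x == (s, true)) eG; rewrite E eqxx -/(dst_count G _) h => /(_ isT).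
Qed.

Let src_count_rem p : src_count (rem e G) p = src_count G p - (esrc e == p).
Proof. by rewrite /src_count (seq.permP (perm_to_rem eG)) /= addKn. Qed.

Let dst_count_rem p : dst_count (rem e G) p = dst_count G p - (edst e == p).
Proof. by rewrite /dst_count (seq.permP (perm_to_rem eG)) /= addKn. Qed.

Let rem_mse_ends x : x \in rem e G -> (esrc x).1 != m /\ (edst x).1 != s.
Proof.
move=> hx; have hxG : x \in G := mem_rem hx; split; apply/eqP => E.
- have [_ _ h1 h2] := wf_merge wf mM.
  case: (portE (esrc x)); rewrite E => E2.
  + have := count_gt0_mem (p := fun x => esrc x == (m, false)) hx.
    by rewrite E2 eqxx -/(src_count _ _) src_count_rem h1 esrc_mse eqxx => /(_ isT).
  + have := count_gt0_mem (p := fun x => esrc x == (m, true)) hxG.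
    by rewrite E2 eqxx -/(src_count _ _) h2 => /(_ isT).
- have [h1 h2 _ _] := wf_split wf sS.
  case: (portE (edst x)); rewrite E => E2.
  + have := count_gt0_mem (p := fun x => edst x == (s, false)) hx.
    by rewrite E2 eqxx -/(dst_count _ _) dst_count_rem h1 edst_mse eqxx => /(_ isT).
  + have := count_gt0_mem (p := fun x => edst x == (s, true)) hxG.
    by rewrite E2 eqxx -/(dst_count _ _) h2 => /(_ isT).
Qed.

Let esrc_redirect x : esrc (redirect m s j0 j1 x) =
  if (esrc x).1 == s then (if (esrc x).2 then j1 else j0, false) else esrc x.
Proof. by []. Qed.

Let edst_redirect x : edst (redirect m s j0 j1 x) =
  if (edst x).1 == m then (if (edst x).2 then j1 else j0, false) else edst x.
Proof. by []. Qed.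

Let rem_lt_fresh x : x \in rem e G -> (esrc x).1 < j0 /\ (edst x).1 < j0.
Proof. by move=> h; apply: fresh_gt_edge; exact: mem_rem h. Qed.

Let j0j1 : (j0 == j1) = false. Proof. by rewrite /j1 /j0; lia. Qed.

(* The bivalent point [j0] (resp. [j1]) replaces the left (resp. right) ports of [m] and [s]. *)
Let count_src_bivalent (c : bool) :
  count (fun x => (esrc x).1 == (if c then j1 else j0)) es1 = 1.
Proof.
rewrite count_map.
have -> : count (preim (redirect m s j0 j1) (fun x => (esrc x).1 == (if c then j1 else j0))) (rem e G)
   = src_count (rem e G) (s, c).
  apply: eq_in_count => x hx /=; rewrite esrc_redirect.
  have [lt _] := rem_lt_fresh hx; move: lt.
  case: (esrc x) => v d /= lt; case: (eqVneq v s) => [->|vs].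
  - by rewrite xpair_eqE eqxx; case: d; case: c; rewrite /= ?eqxx // eq_sym j0j1.
  - by rewrite xpair_eqE (negbTE vs) /=; apply/eqP; case: c => E; move: lt; rewrite E /j1 /j0; lia.
have [_ _ h1 h2] := wf_split wf sS.
rewrite src_count_rem esrc_mse xpair_eqE (negbTE merge_split_neq) /=.
by case: c; rewrite ?subn0 ?h1 ?h2.
Qed.

Let count_dst_bivalent (c : bool) :
  count (fun x => (edst x).1 == (if c then j1 else j0)) es1 = 1.
Proof.
rewrite count_map.
have -> : count (preim (redirect m s j0 j1) (fun x => (edst x).1 == (if c then j1 else j0))) (rem e G)
   = dst_count (rem e G) (m, c).
  apply: eq_in_count => x hx /=; rewrite edst_redirect.
  have [_ lt] := rem_lt_fresh hx; move: lt.
  case: (edst x) => v d /= lt; case: (eqVneq v m) => [->|vm].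
  - by rewrite xpair_eqE eqxx; case: d; case: c; rewrite /= ?eqxx // eq_sym j0j1.
  - by rewrite xpair_eqE (negbTE vm) /=; apply/eqP; case: c => E; move: lt; rewrite E /j1 /j0; lia.
have [h1 h2 _ _] := wf_merge wf mM.
rewrite dst_count_rem edst_mse xpair_eqE eq_sym (negbTE merge_split_neq) /=.
by case: c; rewrite ?subn0 ?h1 ?h2.
Qed.

Let mem_remaining v : v \in splits D ++ merges D -> v != s -> v != m -> v \in V'.
Proof. by rewrite !mem_cat !mem_filter => /orP[]-> -> ->; rewrite ?orbT. Qed.

Let remainingP v : v \in V' -> [/\ v \in splits D ++ merges D, v != s, v != m, v != j0 & v != j1].
Proof.
have ltj : v \in splits D ++ merges D -> v != j0 /\ v != j1.
  by move/fresh_gt_vertex; rewrite -/j0 /j1; split; apply/eqP; lia.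
rewrite mem_cat !mem_filter => /orP[/andP[vs vS]|/andP[vm vM]].
- have vD : v \in splits D ++ merges D by rewrite mem_cat vS.
  have [? ?] := ltj vD; split=> //; apply: contraTneq vS => ->.
  by apply/negP => /(wf_disjoint wf); rewrite mM.
- have vD : v \in splits D ++ merges D by rewrite mem_cat vM orbT.
  by have [? ?] := ltj vD; split=> //; apply: contraNneq sNM => <-.
Qed.

Let remaining1 v := (v \in V') || (v == j0) || (v == j1).

Let redirect_ends x : x \in es1 -> remaining1 (esrc x).1 && remaining1 (edst x).1.
Proof.
case/mapP => x0 hx0 ->; have [n1 n2] := rem_mse_ends hx0.
have /andP[e1 e2] := wf_ends wf (mem_rem hx0).
rewrite esrc_redirect edst_redirect /remaining1; apply/andP; split.
- case: eqP => E; first by case: (esrc x0).2; rewrite eqxx ?orbT.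
  by rewrite mem_remaining //; apply/eqP.
- case: eqP => E; first by case: (edst x0).2; rewrite eqxx ?orbT.
  by rewrite mem_remaining //; apply/eqP.
Qed.

Let src_count_redirect k c : k != s -> k != j0 -> k != j1 ->
  src_count es1 (k, c) = src_count (rem e G) (k, c).
Proof.
move=> ks k0 k1; rewrite /src_count count_map; apply: eq_in_count => x _ /=.
rewrite esrc_redirect; case: ifP => // /eqP E; rewrite !xpair_eqE.
case: (esrc x) E => v d /= ->; rewrite xpair_eqE [s == k]eq_sym (negbTE ks).
by case: d; rewrite /= ?[j1 == _]eq_sym ?[j0 == _]eq_sym ?(negbTE k1) ?(negbTE k0).
Qed.

Let dst_count_redirect k c : k != m -> k != j0 -> k != j1 ->
  dst_count es1 (k, c) = dst_count (rem e G) (k, c).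
Proof.
move=> km k0 k1; rewrite /dst_count count_map; apply: eq_in_count => x _ /=.
rewrite edst_redirect; case: ifP => // /eqP E; rewrite !xpair_eqE.
case: (edst x) E => v d /= ->; rewrite xpair_eqE [m == k]eq_sym (negbTE km).
by case: d; rewrite /= ?[j1 == _]eq_sym ?[j0 == _]eq_sym ?(negbTE k1) ?(negbTE k0).
Qed.

Let lsum_redirect : lsum es1 + y = lsum G.
Proof. by rewrite /lsum (perm_big _ (perm_to_rem eG)) big_cons big_map addnC. Qed.

Let redirect_connected v r : connected G v r -> v != m -> v != s ->
  [/\ r != m, r != s & connected es1 v r] \/ connected es1 v j0 \/ connected es1 v j1.
Proof.
elim=> [u|u w r0 H _ IH] um us; first by left; split=> //; apply: connected_refl.
case/linkedP: H => x hx tx.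
have xe : x != e.
  apply/eqP => E; move: tx; rewrite E => /touchesE[[E1 _]|[_ E1]].
  + by move: um; rewrite -E1 eqxx.
  + by move: us; rewrite -E1 eqxx.
have hxr : x \in rem e G by apply: rem_mem.
have [n1 n2] := rem_mse_ends hxr.
have hx1 : redirect m s j0 j1 x \in es1 by apply: map_f.
have to_j (c : bool) : linked es1 u (if c then j1 else j0) ->
    connected es1 u j0 \/ connected es1 u j1.
  by case: c => /linked_connected; [right|left].
case: (eqVneq w m) => [wm|wm]; last case: (eqVneq w s) => [ws|ws].
- right; apply: (to_j (edst x).2); apply/linkedP; exists (redirect m s j0 j1 x) => //.
  case/touchesE: tx => -[s1 d1]; first by rewrite /touches esrc_redirect edst_redirect s1 d1 wm (negbTE us) eqxx /= s1 !eqxx.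
  by rewrite -wm s1 eqxx in n1.
- right; apply: (to_j (esrc x).2); apply/linkedP; exists (redirect m s j0 j1 x) => //.
  case/touchesE: tx => -[s1 d1]; first by rewrite -ws d1 eqxx in n2.
  by rewrite /touches esrc_redirect edst_redirect s1 d1 ws (negbTE um) eqxx /= d1 !eqxx orbT.
- have fixed : redirect m s j0 j1 x = x.
    by case/touchesE: tx => -[s1 d1]; rewrite /redirect s1 d1 ?(negbTE um) ?(negbTE us)
      ?(negbTE wm) ?(negbTE ws); case: x {hx xe hxr n1 n2 hx1 s1 d1} => [[p q] l].
  have uw : linked es1 u w by apply/linkedP; exists x; rewrite // -fixed.
  case: (IH wm ws) => [[h1 h2 h3]|[h|h]].
  + by left; split=> //; apply: connected_step h3.
  + by right; left; apply: connected_step h.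
  + by right; right; apply: connected_step h.
Qed.

Let out_j0 : count (fun x => (esrc x).1 == j0) es1 = 1 := count_src_bivalent false.
Let in_j0 : count (fun x => (edst x).1 == j0) es1 = 1 := count_dst_bivalent false.

Let out_j1 : count (fun x => (esrc x).1 == j1) es2.1 = 1.
Proof.
rewrite (contract_count_src y (loops D) out_j0 in_j0 (q := fun p => p.1 == j1)).
  exact: count_src_bivalent true.
by move=> c; rewrite /= j0j1.
Qed.

Let in_j1 : count (fun x => (edst x).1 == j1) es2.1 = 1.
Proof.
rewrite (contract_count_dst y (loops D) out_j0 in_j0 (q := fun p => p.1 == j1)).
  exact: count_dst_bivalent true.
by move=> c; rewrite /= j0j1.
Qed.

Let applyI_src_count k c : k \in V' -> src_count es3.1 (k, c) = src_count G (k, c).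
Proof.
case/remainingP => _ ks km k0 k1.
have qj j : k != j -> forall c', ((j, c') == (k, c)) = false.
  by move=> kj c'; rewrite xpair_eqE eq_sym (negbTE kj).
rewrite /src_count (contract_count_src y es2.2 out_j1 in_j1 (q := pred1 (k, c))); last exact: qj.
rewrite (contract_count_src y (loops D) out_j0 in_j0 (q := pred1 (k, c))); last exact: qj.
by rewrite -/(src_count es1 _) src_count_redirect // src_count_rem esrc_mse (qj _ km) subn0.
Qed.

Let applyI_dst_count k c : k \in V' -> dst_count es3.1 (k, c) = dst_count G (k, c).
Proof.
case/remainingP => _ ks km k0 k1.
have qj j : k != j -> forall c', ((j, c') == (k, c)) = false.
  by move=> kj c'; rewrite xpair_eqE eq_sym (negbTE kj).
rewrite /dst_count (contract_count_dst y es2.2 out_j1 in_j1 (q := pred1 (k, c))); last exact: qj.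
rewrite (contract_count_dst y (loops D) out_j0 in_j0 (q := pred1 (k, c))); last exact: qj.
by rewrite -/(dst_count es1 _) dst_count_redirect // dst_count_rem edst_mse (qj _ ks) subn0.
Qed.

Let applyI_ends x : x \in es3.1 -> (esrc x).1 \in V' /\ (edst x).1 \in V'.
Proof.
pose P v := remaining1 v && (v != j0).
have end2 x' : x' \in es2.1 -> P (esrc x').1 && P (edst x').1.
  by move=> hx'; case/and4P: (contract_end out_j0 in_j0 redirect_ends hx') => h1 h2 h3 h4; rewrite /P h1 h2 h3 h4.
have inV v : P v -> v != j1 -> v \in V'.
  by rewrite /P /remaining1 => /andP[/orP[/orP[//|/eqP->]|/eqP->]]; rewrite eqxx.
by move=> hx; case/and4P: (contract_end out_j1 in_j1 end2 hx) => /inV h1 /h1 ? /inV h2 /h2.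
Qed.

Lemma wf_applyI : wf_diagram (applyI D e).
Proof.
rewrite applyIE; constructor => /=.
- move=> v; rewrite !mem_filter => /andP[_ vS]; apply/negP => /andP[_].
  exact/negP/(wf_disjoint wf).
- move=> v vS; have vV : v \in V' by rewrite mem_cat vS.
  rewrite !applyI_dst_count // !applyI_src_count //; apply: (wf_split wf).
  by move: vS; rewrite mem_filter => /andP[].
- move=> v vM; have vV : v \in V' by rewrite mem_cat vM orbT.
  rewrite !applyI_dst_count // !applyI_src_count //; apply: (wf_merge wf).
  by move: vM; rewrite mem_filter => /andP[].
- by move=> x /applyI_ends[-> ->].
Qed.

Let total_label_applyI : total_label (applyI D e) = total_label D + y.
Proof.
rewrite applyIE !total_labelE /= (contract_total y es2.2 out_j1 in_j1).
have := contract_total y (loops D) out_j0 in_j0; rewrite -/es2 -lsum_redirect; lia.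
Qed.

Lemma size_merges_applyI : size (merges (applyI D e)) < size (merges D).
Proof.
rewrite applyIE /= size_filter -(count_predC (fun v => v != m) (merges D)) -[X in X < _]addn0.
by rewrite ltn_add2l; apply: (count_gt0_mem mM); rewrite /= eqxx.
Qed.

(* The component of [m] splits into at most the components of [j0] and [j1]. *)
Let covers_redirect R : covers G (vset D) R ->
  exists2 r0, r0 \in R & covers es1 V' (j0 :: j1 :: rem r0 R).
Proof.
move=> cv; have mD : m \in vset D by rewrite /vset mem_undup mem_cat mM orbT.
have [r0 hr0 cm0] := cv m mD; exists r0 => // v vV.
have [vD vs vm _ _] := remainingP vV.
have [r hr c] := cv v (etrans (mem_undup _ _) vD).
have to_j : connected es1 v j0 \/ connected es1 v j1 ->
    exists2 r', r' \in [:: j0, j1 & rem r0 R] & connected es1 v r'.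
  by case=> h; [exists j0|exists j1]; rewrite ?inE ?eqxx ?orbT.
case: (eqVneq r r0) => [rr0|rr0].
- have cvm : connected G v m by apply: connected_trans c _; rewrite rr0; exact: connected_sym.
  by case: (redirect_connected cvm vm vs) => [[]|]; [rewrite eqxx|].
- case: (redirect_connected c vm vs) => [[_ _ h]|]; last exact: to_j.
  by exists r => //; rewrite !inE (rem_mem rr0 hr) !orbT.
Qed.

Lemma covers_applyI R : covers G (vset D) R -> exists R',
  covers (edges (applyI D e)) (vset (applyI D e)) R' /\
  size R' + size (loops (applyI D e)) <= size R + size (loops D) + 1.
Proof.
move=> cv; have [r0 hr0 cv1] := covers_redirect cv.
have vsetE : vset (applyI D e) =i V' by move=> v; rewrite applyIE /vset mem_undup.
have notV j : j \in [:: j0; j1] -> j \notin vset (applyI D e).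
  by rewrite vsetE !inE => jj; apply/negP => /remainingP[_ _ _ /negP ? /negP ?]; case/orP: jj.
have cv1' : covers es1 (vset (applyI D e)) [:: j0, j1 & rem r0 R].
  by move=> v; rewrite vsetE; apply: cv1.
have [R2 [cv2 sz2 in2]] := contract_covers y (loops D) out_j0 in_j0 cv1' (notV j0 (mem_head _ _)) (mem_head _ _).
have j1R2 : j1 \in R2 by apply: in2; rewrite ?inE ?eqxx ?orbT // eq_sym j0j1.
have j1V : j1 \notin vset (applyI D e) by apply: notV; rewrite !inE eqxx orbT.
have [R3 [cv3 sz3 _]] := contract_covers y es2.2 out_j1 in_j1 cv2 j1V j1R2.
exists R3; rewrite applyIE; split => //=.
move: sz2 sz3; rewrite -/es2 -/es3 [size (_ :: _)]/= size_rem // prednK; last by case: (R) hr0.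
set k := size R; lia.
Qed.

Lemma total_label_applyI_le : total_label (applyI D e) <= (total_label D).*2.
Proof. by rewrite total_label_applyI total_labelE -lsum_redirect; lia. Qed.
End RuleI.

(** * Components and the initial diagram *)

Lemma nodes_iota t o : nodes t o = iota o (size_int t).
Proof.
elim: t o => [|l IHl r IHr] o //=.
by rewrite IHl IHr -iotaD.
Qed.

Lemma leaves_size_int t : leaves t = (size_int t).+1.
Proof. elim: t => //= l IHl r IHr; rewrite IHl IHr; lia. Qed.

Lemma iedges_range t o pc : pc \in iedges t o ->
  o <= pc.1.1 < o + size_int t /\ o < pc.2 < o + size_int t.
Proof.
elim: t o pc => [|l IHl r IHr] o pc //=.
rewrite !mem_cat => /or4P[H|H|/IHl [h1 h2]|/IHr [h1 h2]].
- by move: H; case: l {IHl} => // l1 l2; rewrite inE => /eqP-> /=; lia.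
- by move: H; case: r {IHr} => // r1 r2; rewrite inE => /eqP-> /=; lia.
- by move: h1 h2; case: pc => [[u b] w] /=; lia.
- by move: h1 h2; case: pc => [[u b] w] /=; lia.
Qed.

Lemma lports_range t o p : p \in lports t o -> o <= p.1 < o + size_int t.
Proof.
case: p => v c /=; elim: t o => [|l IHl r IHr] o //=.
rewrite mem_cat => /orP[H|H].
- move: H; case: l IHl => [|l1 l2] IHl; first by rewrite inE => /eqP [-> _] /=; lia.
  by move/IHl => /=; lia.
- move: H; case: r IHr => [|r1 r2] IHr; first by rewrite inE => /eqP [-> _] /=; lia.
  by move/IHr => /=; lia.
Qed.

Lemma count_iedges_child t o v :
  count (fun pc => pc.2 == v) (iedges t o) = ((o < v) && (v < o + size_int t)).
Proof.
elim: t o => [|l IHl r IHr] o /=; first by lia.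
rewrite !count_cat IHl IHr.
case: l IHl => [|l1 l2] IHl; case: r IHr => [|r1 r2] IHr /=; lia.
Qed.

Lemma count_iedges_parent t o p :
  count (fun pc => pc.1 == p) (iedges t o) + count (pred1 p) (lports t o) =
  ((o <= p.1) && (p.1 < o + size_int t)).
Proof.
case: p => v c.
elim: t o => [|l IHl r IHr] o /=; first by rewrite addn0; case: leqP => //; lia.
rewrite !count_cat.
have E : forall (l : tree) (b : bool) o1 o2, count (fun pc : nat * bool * nat => pc.1 == (v, c))
          (if l is Node _ _ then [:: ((o1, b), o2)] else [::]) +
          count (pred1 (v, c)) (if l is Node _ _ then lports l o2 else [:: (o1, b)]) =
          ((o1, b) == (v, c)) + (if l is Node _ _ then count (pred1 (v, c)) (lports l o2) else 0).
  by move=> [|? ?] b o1 o2 /=; rewrite ?addn0 // eq_sym.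
have := E l false o o.+1; have := E r true o (o.+1 + size_int l).
have := IHl o.+1; have := IHr (o.+1 + size_int l).
case: l {IHl E} => [|l1 l2]; case: r {IHr} => [|r1 r2] /=; rewrite !xpair_eqE;
  case: c => /=; lia.
Qed.

Lemma size_lports t o : (if t is Node _ _ then size (lports t o) else 1) = leaves t.
Proof.
elim: t o => [|l IHl r IHr] o //=.
rewrite size_cat; congr (_ + _); [case: l IHl => //= ? ? ->|case: r IHr => //= ? ? ->].
Qed.

Section Components.
Variable D : diagram.
Hypothesis wf : wf_diagram D.

Lemma adjD_sym : symmetric (@adjD D).
Proof. by move=> u v; rewrite /adjD; apply: eq_has => x; rewrite orbC. Qed.

Lemma vset_ends x : x \in edges D -> ((esrc x).1 \in vset D) && ((edst x).1 \in vset D).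
Proof. by move=> h; rewrite /vset !mem_undup; apply: wf_ends wf _ h. Qed.

Lemma connected_connect u w : connected (edges D) u w -> forall x : seq_sub (vset D), ssval x = u ->
  exists y : seq_sub (vset D), ssval y = w /\ connect (@adjD D) x y.
Proof.
elim=> [v|u1 v w1 H _ IH] x hx; first by exists x; split=> //; apply: connect0.
case/linkedP: H => z hz tz.
have hv : v \in vset D.
  have /andP[h1 h2] := vset_ends hz.
  by case/touchesE: tz => [[_ <-]|[<- _]].
have [y [hy cy]] := IH (SeqSub hv) erefl.
exists y; split=> //; apply: connect_trans cy; apply: connect1.
by rewrite /adjD /=; apply/hasP; exists z => //; rewrite -/(touches _ _ _) hx.
Qed.

Lemma n_comp_le_covers R : covers (edges D) (vset D) R -> n_comp (@adjD D) predT <= size R.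
Proof.
move=> cv.
have csym := sym_connect_sym adjD_sym.
set ys := pmap insub R : seq (seq_sub (vset D)).
apply: leq_trans (_ : #|[seq root (@adjD D) y | y <- ys]| <= _); last first.
  apply: leq_trans (card_size _) _; rewrite size_map /ys size_pmap_sub; exact: count_size.
apply: subset_leq_card; apply/subsetP => x; rewrite !inE andbT => /eqP rx.
have [r hr c] := cv (ssval x) (ssvalP x).
have [y [hy cy]] := connected_connect c erefl.
apply/mapP; exists y; first by rewrite /ys mem_pmap_sub /= hy.
by rewrite -rx; apply/rootP.
Qed.
End Components.

Lemma nodes_connected_root es t o : (forall pc, pc \in iedges t o -> linked es pc.1.1 pc.2) ->
  forall v, v \in nodes t o -> connected es v o.
Proof.
elim: t o => [|l IHl r IHr] o H v //.
have subl : forall pc, pc \in iedges l o.+1 -> pc \in iedges (Node l r) o.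
  by move=> pc h; rewrite /= !mem_cat h !orbT.
have subr : forall pc, pc \in iedges r (o.+1 + size_int l) -> pc \in iedges (Node l r) o.
  by move=> pc h; rewrite /= !mem_cat h !orbT.
rewrite /= inE mem_cat => /orP[/eqP->|/orP[hv|hv]]; first exact: connected_refl.
- apply: connected_trans (IHl _ (fun pc h => H pc (subl pc h)) _ hv) _.
  apply: linked_connected; rewrite linkedC; have := H ((o, false), o.+1); apply.
  by move: hv; clear - l r o; case: l => //= ? ? _; rewrite inE eqxx.
- apply: connected_trans (IHr _ (fun pc h => H pc (subr pc h)) _ hv) _.
  apply: linked_connected; rewrite linkedC; have := H ((o, true), o.+1 + size_int l); apply.
  move: hv; clear - l r o; case: r => // ? ? _.
  by case: l => [|? ?]; rewrite /= !(inE, mem_cat) eqxx ?orbT.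
Qed.

Lemma count_port_false (T : Type) (s : seq T) (g : T -> nat) v c :
  count (fun x => (g x, false) == (v, c)) s = (~~c) * count (fun x => g x == v) s.
Proof.
case: c => /=; last by rewrite mul1n; apply: eq_count => x; rewrite xpair_eqE andbT.
by rewrite mul0n; elim: s => //= x s ->; rewrite xpair_eqE andbF.
Qed.

Section InitialDiagram.
Variables (n : nat) (Tm Tp : tree) (sigma : 'S_n).
Let o := size_int Tm.
Let Np := size_int Tp.
Let lm := lports Tm 0.
Let lp := lports Tp o.
Hypothesis hm : 0 < o.
Hypothesis hp : 0 < Np.
Hypothesis slm : size lm = n.
Hypothesis slp : size lp = n.

Let E1 := [seq mkedge pc.1 (pc.2, false) 0 | pc <- iedges Tm 0].
Let E2 := [seq mkedge (pc.2, false) pc.1 0 | pc <- iedges Tp o].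
Let E3 := [seq mkedge (nth (0, false) lm i) (nth (0, false) lp (sigma i)) 0 | i : 'I_n <- enum 'I_n].
Let E4 := [:: mkedge (o, false) (0, false) 1].
Let E := E1 ++ E2 ++ E3 ++ E4.

Lemma map_nth_ord_enum (l : seq (nat * bool)) : size l = n -> [seq nth (0, false) l i | i : 'I_n <- enum 'I_n] = l.
Proof.
move=> sl.
have -> : [seq nth (0, false) l i | i : 'I_n <- enum 'I_n] =
          [seq nth (0, false) l i | i <- [seq val i | i : 'I_n <- enum 'I_n]] by rewrite -map_comp.
by rewrite val_enum_ord -sl; exact: mkseq_nth.
Qed.

Lemma perm_map_perm_enum : perm_eq [seq sigma i | i <- enum 'I_n] (enum 'I_n).
Proof.
apply: uniq_perm; first by rewrite map_inj_uniq ?enum_uniq //; exact: perm_inj.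
  exact: enum_uniq.
move=> i; rewrite mem_enum; apply/mapP; exists ((sigma^-1)%g i); first by rewrite mem_enum.
by rewrite permKV.
Qed.

Lemma count_src_leaf_edges p : count (fun x => esrc x == p) E3 = count (pred1 p) lm.
Proof. by rewrite -(map_nth_ord_enum slm) !count_map. Qed.

Lemma count_dst_leaf_edges p : count (fun x => edst x == p) E3 = count (pred1 p) lp.
Proof.
rewrite count_map.
transitivity (count (pred1 p) [seq nth (0, false) lp (sigma i) | i : 'I_n <- enum 'I_n]).
  by rewrite [RHS]count_map.
rewrite -[in RHS](map_nth_ord_enum slp).
rewrite (map_comp (fun i : 'I_n => nth (0, false) lp i) sigma).
by apply/seq.permP; apply: perm_map; exact: perm_map_perm_enum.
Qed.

Lemma leaf_edges_ends x : x \in E3 -> esrc x \in lm /\ edst x \in lp.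
Proof. by case/mapP => i _ ->; split; apply: mem_nth; rewrite ?slm ?slp. Qed.
Lemma dst_count_D0 v c : dst_count E (v, c) =
  (~~c) * ((0 < v) && (v < o)) + ((o <= v) && (v < o + Np)) + ((v == 0) && ~~c).
Proof.
rewrite /dst_count /E !count_cat count_dst_leaf_edges.
rewrite count_map (count_port_false _ (fun pc : nat * bool * nat => pc.2)).
rewrite count_map.
have -> : count (preim (fun pc : nat * bool * nat => mkedge (pc.2, false) pc.1 0) (fun x => edst x == (v, c))) (iedges Tp o)
   = count (fun pc => pc.1 == (v, c)) (iedges Tp o) by [].
rewrite addnA addnA -[_ + _ + count_mem _ _]addnA (count_iedges_parent Tp o (v, c)) -/o -/Np.
have := count_iedges_child Tm 0 v; rewrite -/o add0n => ->.
by rewrite /= xpair_eqE [0 == v]eq_sym; case: c => /=; lia.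
Qed.

Lemma src_count_D0 v c : src_count E (v, c) =
  (v < o) + (~~c) * ((o < v) && (v < o + Np)) + ((v == o) && ~~c).
Proof.
rewrite /src_count /E !count_cat count_src_leaf_edges.
rewrite [count _ (map _ (iedges Tp o))]count_map (count_port_false _ (fun pc : nat * bool * nat => pc.2)).
rewrite count_map.
have -> : count (preim (fun pc : nat * bool * nat => mkedge pc.1 (pc.2, false) 0) (fun x => esrc x == (v, c))) (iedges Tm 0)
   = count (fun pc => pc.1 == (v, c)) (iedges Tm 0) by [].
rewrite [X in _ + X]addnCA addnA (count_iedges_parent Tm 0 (v, c)) -/o.
rewrite (count_iedges_child Tp o v) -/Np.
by rewrite /= xpair_eqE [o == v]eq_sym; case: c => /=; lia.
Qed.

Let D0n := Diagram (nodes Tm 0) (nodes Tp o) E [::].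

Lemma mem_nodes_D0 v : (v \in nodes Tm 0 ++ nodes Tp o) = (v < o + Np).
Proof. by rewrite mem_cat !nodes_iota !mem_iota -/o -/Np; lia. Qed.

Lemma wf_D0 : wf_diagram D0n.
Proof.
constructor => /=.
- by move=> v; rewrite !nodes_iota !mem_iota -/o -/Np; lia.
- move=> v; rewrite nodes_iota mem_iota -/o add0n => hv.
  by rewrite !dst_count_D0 !src_count_D0 /=; split; lia.
- move=> v; rewrite nodes_iota mem_iota -/Np => hv.
  by rewrite !dst_count_D0 !src_count_D0 /=; split; lia.
- move=> x; rewrite !mem_nodes_D0 /E !mem_cat => /or4P[|||].
  + case/mapP => pc hpc ->; rewrite /=.
    by have := iedges_range hpc; rewrite -/o; case: (pc) => [[? ?] ?] /=; lia.
  + case/mapP => pc hpc ->; rewrite /=.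
    by have := iedges_range hpc; rewrite -/Np; case: (pc) => [[? ?] ?] /=; lia.
  + move=> /leaf_edges_ends [h1 h2].
    have := lports_range h1; have := lports_range h2; rewrite -/o -/Np; case: (esrc x) => ? ?; case: (edst x) => ? ? /=; lia.
  + by rewrite inE => /eqP->; rewrite /=; lia.
Qed.

Lemma total_label_D0 : total_label D0n = 1.
Proof.
rewrite /total_label /= /E !map_cat !sumn_cat addn0.
have unlabelled (T : Type) (s : seq T) (f : T -> edge) :
    (forall x, elab (f x) = 0) -> sumn (map elab (map f s)) = 0.
  by move=> f0; elim: s => //= x s ->; rewrite f0.
by rewrite !unlabelled.
Qed.

Lemma covers_D0 : covers (edges D0n) (vset D0n) [:: 0].
Proof.
move=> v; rewrite /vset mem_undup /= mem_cat => hv; exists 0; first by rewrite inE.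
have adjE x : x \in E -> linked E (esrc x).1 (edst x).1 by apply: linked_edge.
have cm : forall w, w \in nodes Tm 0 -> connected E w 0.
  apply: nodes_connected_root => pc hpc; have := adjE (mkedge pc.1 (pc.2, false) 0).
  by apply; rewrite /E !mem_cat (map_f _ hpc).
case/orP: hv => [/cm //|hv].
have cp : forall w, w \in nodes Tp o -> connected E w o.
  apply: nodes_connected_root => pc hpc; have := adjE (mkedge (pc.2, false) pc.1 0).
  rewrite /= linkedC; apply; by rewrite /E !mem_cat (map_f _ hpc) orbT.
apply: connected_trans (cp _ hv) _; apply: linked_connected.
have := adjE (mkedge (o, false) (0, false) 1); apply.
by rewrite /E !mem_cat inE eqxx !orbT.
Qed.
End InitialDiagram.

Definition invariant n D := [/\ wf_diagram D, total_label D * 2 ^ size (merges D) <= 2 ^ (n - 1) &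
  exists R, covers (edges D) (vset D) R /\ size R + size (loops D) + size (merges D) <= n].

Lemma invariant_ruleI n D D' : invariant n D -> ruleI D D' -> invariant n D'.
Proof.
move=> [wf tl [R [cv sz]]] [e [mse ->]]; split; first exact: wf_applyI.
- apply: leq_trans tl; set M' := size (merges _).
  apply: (@leq_trans ((total_label D).*2 * 2 ^ M')).
    by rewrite leq_mul2r total_label_applyI_le ?orbT.
  rewrite -mul2n -mulnA mulnCA -expnS leq_mul2l leq_pexp2l ?orbT //.
  exact: size_merges_applyI.
- have [R' [cvR szR]] := covers_applyI wf mse cv; exists R'; split=> //.
  by have := size_merges_applyI mse; lia.
Qed.

Lemma invariant_D0 n Tm Tp (sigma : 'S_n) : 1 <= n -> leaves Tm = n -> leaves Tp = n ->
  invariant n (D0 Tm Tp sigma).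
Proof.
move=> n1 hTm hTp; case: Tm hTm => [|a b] hTm; last case: Tp hTp => [|c d] hTp.
1,2: split; [exact: Build_wf_diagram|by rewrite /total_label /= mul1n expn_gt0|].
1,2: by exists [::]; split=> //=; lia.
have slm : size (lports (Node a b) 0) = n by rewrite -hTm -(size_lports _ 0).
have slp : size (lports (Node c d) (size_int (Node a b))) = n by rewrite -hTp -(size_lports _ (size_int (Node a b))).
have merges_D0 : size (merges (D0 (Node a b) (Node c d) sigma)) = n - 1.
  have -> : merges (D0 (Node a b) (Node c d) sigma) = nodes (Node c d) (size_int (Node a b)) by [].
  by rewrite nodes_iota size_iota -hTp leaves_size_int; lia.
split; first exact: (wf_D0 sigma (Tm := Node a b) (Tp := Node c d)).
- by rewrite (total_label_D0 (Node a b) (Node c d) sigma) merges_D0 mul1n.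
- exists [:: 0]; split; first exact: (@covers_D0 n (Node a b) (Node c d) sigma).
  by rewrite merges_D0 /=; lia.
Qed.

Lemma invariant_reduces n D D' : reduces D D' -> invariant n D -> invariant n D'.
Proof. elim=> // D1 D2 D3 H _ IH h; apply: IH; exact: invariant_ruleI h H. Qed.

Unset Implicit Arguments.
Theorem mainTheorem1 (n : nat) (Tm Tp : tree) (sigma : 'S_n)
  (Hn : 1 <= n) (HTm : leaves Tm = n) (HTp : leaves Tp = n)
  (D : diagram) :
  reduces (D0 Tm Tp sigma) D -> reduced D ->
  ncomponents D <= n /\ total_label D <= 2 ^ (n - 1).
Proof.
move=> hr _.
have [wf tl [R [cv sz]]] := invariant_reduces hr (invariant_D0 sigma Hn HTm HTp).
split.
- rewrite /ncomponents; have := n_comp_le_covers wf cv; lia.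
- apply: leq_trans tl; rewrite -{1}(muln1 (total_label D)) leq_mul2l expn_gt0 orbT //.
Qed.
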